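(* Let $p\geq 3$ be a prime, $u\in\{2,\ldots,p-1\}$ and $s$ a positive integer. Then $$\nu_{p}\big(A_{p,(p-1)(up^s-1)}(n)\big)=1$$ for infinitely many $n\in\mathbb{N}$.
   Context: For an integer $m\geq 2$ and a positive integer $k$, the integers $A_{m,k}(n)$, $n\in\mathbb{N}=\{0,1,2,\ldots\}$, are defined by the formal power series identity $\prod_{i=0}^{\infty}\big(1-x^{m^{i}}\big)^{-k}=\sum_{n=0}^{\infty}A_{m,k}(n)x^{n}$. For a prime $p$, $\nu_p(n)$ denotes the $p$-adic valuation of the integer $n$, with $\nu_p(0)=+\infty$. *)

From mathcomp Require Import all_boot all_order all_algebra.
Set Implicit Arguments. Unset Strict Implicit. Unset Printing Implicit Defensive.
Import GRing.Theory.
Local Open Scope ring_scope.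

(* A_{m,k}(n) = [x^n] prod_{i>=0} (1 - x^{m^i})^{-k}.
   Modulo x^{n+1}, (1 - y)^{-1} agrees with sum_{j<=n} y^j (for y = x^{m^i},
   m^i >= 1), and factors with i > n (so m^i > n, as m >= 2) are 1.
   Hence the coefficient of x^n of the infinite product equals the
   coefficient of x^n of the following finite polynomial product. *)
Definition geom_trunc (m i n : nat) : {poly int} :=
  \sum_(j < n.+1) 'X^(j * m ^ i).

Definition A (m k n : nat) : int :=
  (\prod_(i < n.+1) (geom_trunc m i n) ^+ k)`_n.

(* p-adic valuation of an integer (only used at nonzero values here:
   nu p a = 1 forces a <> 0, since logn p 0 = 0). *)
Definition nu (p : nat) (a : int) : nat := logn p `|a|%N.

From mathcomp Require Import all_boot all_order all_algebra.
From mathcomp Require Import ring zify.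
Set Implicit Arguments. Unset Strict Implicit. Unset Printing Implicit Defensive.
Import GRing.Theory.
Local Open Scope ring_scope.

(** Let w = u p^s and k = (p - 1)(w - 1).  The generating function
    F(x) = sum_n A(n) x^n satisfies F(x) (1 - x)^k = F(x^p), and modulo any M
    a power series with constant term 1 is determined by this functional
    equation.  Modulo p it is solved by (1 - x)^(w - 1), because
    (1 - x)^p = 1 - x^p; hence p divides A(n) for n >= w.  Modulo p^2 it is
    solved by (1 - x)^w P(x), where P(x) = prod_(i >= 0) (1 - x^(p^i))^(p - 1)
    and p | w is used to lift Frobenius to (1 - x)^(p w) = (1 - x^p)^w.  The
    coefficient of x^w in (1 - x)^w P(x) is (-1)^u C(u + p - 1, u) modulo p^2,
    whose p-adic valuation is 1.  Finally, comparing coefficients of x^(p n)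
    in F(x^p) = F(x) (1 - x)^k expresses A(n) as a combination of the A(j) with
    n < j <= p n, all divisible by p; so if p^2 does not divide A(n), then some
    A(j) with j > n has valuation exactly 1. *)

(** * Congruences of truncated power series *)

Definition eqmodX (M : int) (T : nat) (f g : {poly int}) : Prop :=
  forall i, (i < T)%N -> (M %| f`_i - g`_i)%Z.

Notation "f = g %[mod M , 'X^ T ]" := (eqmodX M T f g) : ring_scope.

Section TruncatedCongruence.

Variables (M : int) (T : nat).
Implicit Types f g h : {poly int}.

Lemma eqmodX_refl f : f = f %[mod M, 'X^T].
Proof. by move=> i _; rewrite subrr dvdz0. Qed.

Lemma eqmodX_sym f g : f = g %[mod M, 'X^T] -> g = f %[mod M, 'X^T].
Proof. by move=> hfg i /hfg; rewrite -opprB rpredN. Qed.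

Lemma eqmodX_trans g f h :
  f = g %[mod M, 'X^T] -> g = h %[mod M, 'X^T] -> f = h %[mod M, 'X^T].
Proof.
by move=> hfg hgh i hi; rewrite -(subrK g`_i f`_i) -addrA rpredD ?hfg ?hgh.
Qed.

Lemma eqmodX_sub0 f g : f = g %[mod M, 'X^T] <-> f - g = 0 %[mod M, 'X^T].
Proof. by split=> hfg i /hfg; rewrite coefB coef0 subr0. Qed.

Lemma eqmodXD f g f' g' : f = g %[mod M, 'X^T] -> f' = g' %[mod M, 'X^T] ->
  f + f' = g + g' %[mod M, 'X^T].
Proof. by move=> hf hf' i hi; rewrite !coefD opprD addrACA rpredD ?hf ?hf'. Qed.

Lemma eqmodXN f g : f = g %[mod M, 'X^T] -> - f = - g %[mod M, 'X^T].
Proof. by move=> hf i hi; rewrite !coefN -opprD rpredN hf. Qed.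

Lemma eqmodXB f g f' g' : f = g %[mod M, 'X^T] -> f' = g' %[mod M, 'X^T] ->
  f - f' = g - g' %[mod M, 'X^T].
Proof. by move=> hf /eqmodXN; apply: eqmodXD. Qed.

Lemma eqmodX0_mulr f g : f = 0 %[mod M, 'X^T] -> f * g = 0 %[mod M, 'X^T].
Proof.
move=> hf i hi; rewrite coefM coef0 subr0 rpred_sum // => j _.
have := hf j (leq_ltn_trans (leq_ord j) hi); rewrite coef0 subr0.
exact: dvdz_mulr.
Qed.

Lemma eqmodXM f g f' g' : f = g %[mod M, 'X^T] -> f' = g' %[mod M, 'X^T] ->
  f * f' = g * g' %[mod M, 'X^T].
Proof.
move=> /eqmodX_sub0 hf /eqmodX_sub0 hf'; apply/eqmodX_sub0.
have -> : f * f' - g * g' = (f - g) * f' + (f' - g') * g by ring.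
by rewrite -(addr0 0); apply: eqmodXD; apply: eqmodX0_mulr.
Qed.

Lemma eqmodXX n f g : f = g %[mod M, 'X^T] -> f ^+ n = g ^+ n %[mod M, 'X^T].
Proof.
move=> hfg; elim: n => [|n IH]; first exact: eqmodX_refl.
by rewrite !exprS; apply: eqmodXM.
Qed.

Lemma eqmodX_sum (I : Type) (r : seq I) (P : pred I) (F G : I -> {poly int}) :
  (forall i, P i -> F i = G i %[mod M, 'X^T]) ->
  \sum_(i <- r | P i) F i = \sum_(i <- r | P i) G i %[mod M, 'X^T].
Proof.
move=> hFG; elim/big_ind2: _ => // [|*]; [exact: eqmodX_refl | exact: eqmodXD].
Qed.

Lemma eqmodX_prod (I : Type) (r : seq I) (P : pred I) (F G : I -> {poly int}) :
  (forall i, P i -> F i = G i %[mod M, 'X^T]) ->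
  \prod_(i <- r | P i) F i = \prod_(i <- r | P i) G i %[mod M, 'X^T].
Proof.
move=> hFG; elim/big_ind2: _ => // [|*]; [exact: eqmodX_refl | exact: eqmodXM].
Qed.

Lemma eqmodX_comp q f g : (0 < q)%N -> f = g %[mod M, 'X^T] ->
  f \Po 'X^q = g \Po 'X^q %[mod M, 'X^T].
Proof.
move=> q0 hfg i hi; rewrite !coef_comp_poly_Xn //.
case: ifP => _; last by rewrite subrr dvdz0.
exact/hfg/(leq_ltn_trans (leq_div i q) hi).
Qed.

Lemma eqmodX_Xn0 q : (T <= q)%N -> 'X^q = 0 %[mod M, 'X^T].
Proof. by move=> hq i hi; rewrite coefXn coef0 subr0 ltn_eqF ?dvdz0 ?(leq_trans hi). Qed.

Lemma eqmodX_1subXn q : (T <= q)%N -> 1 - 'X^q = 1 %[mod M, 'X^T].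
Proof.
move=> hq; rewrite -[X in eqmodX _ _ _ X]subr0.
by apply: eqmodXB; [apply: eqmodX_refl | apply: eqmodX_Xn0].
Qed.

End TruncatedCongruence.

Lemma eqmodX_leq M T T' f g : (T' <= T)%N ->
  f = g %[mod M, 'X^T] -> f = g %[mod M, 'X^T'].
Proof. by move=> hT hfg i hi; apply/hfg/(leq_trans hi hT). Qed.

Lemma eqmodX_dvd M M' T f g : (M' %| M)%Z ->
  f = g %[mod M, 'X^T] -> f = g %[mod M', 'X^T].
Proof. by move=> hM hfg i /hfg; apply: dvdz_trans. Qed.

Lemma eqmodX_coef T f g i : f = g %[mod 0, 'X^T] -> (i < T)%N -> f`_i = g`_i.
Proof. by move=> hfg /hfg; rewrite dvd0z subr_eq0 => /eqP. Qed.

Lemma eqmodX0_mul M N T f g : f = 0 %[mod M, 'X^T] -> g = 0 %[mod N, 'X^T] ->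
  f * g = 0 %[mod M * N, 'X^T].
Proof.
move=> hf hg i hi; rewrite coefM coef0 subr0 rpred_sum // => j _.
have := hg (i - j)%N (leq_ltn_trans (leq_subr j i) hi).
have := hf j (leq_ltn_trans (leq_ord j) hi).
rewrite !coef0 !subr0; exact: dvdz_mul.
Qed.

Lemma eqmodX_expM M T n f g : (M %| n%:Z)%Z ->
  f = g %[mod M, 'X^T] -> f ^+ n = g ^+ n %[mod M * M, 'X^T].
Proof.
move=> Mn hfg; apply/eqmodX_sub0; rewrite subrXX.
apply: eqmodX0_mul; first by move/eqmodX_sub0: hfg.
apply: (@eqmodX_trans _ _ (\sum_(i < n) g ^+ (n.-1 - i) * g ^+ i)).
  by apply: eqmodX_sum => i _; apply: eqmodXM; [apply: eqmodXX | apply: eqmodX_refl].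
have -> : \sum_(i < n) g ^+ (n.-1 - i) * g ^+ i = g ^+ n.-1 *+ n.
  rewrite -[n in _ *+ n]card_ord -sumr_const; apply: eq_bigr => i _.
  by rewrite -exprD subnK // -ltnS (ltn_predK (ltn_ord i)).
by move=> i _; rewrite coefMn coef0 subr0 -mulr_natr dvdz_mull // natz.
Qed.

Lemma eqmodX_sum0 M T (I : Type) (r : seq I) (P : pred I) (F : I -> {poly int}) :
  (forall i, P i -> F i = 0 %[mod M, 'X^T]) ->
  \sum_(i <- r | P i) F i = 0 %[mod M, 'X^T].
Proof.
move=> hF; rewrite -[X in eqmodX _ _ _ X](@big1_eq _ 0 +%R _ r P).
exact: eqmodX_sum.
Qed.

Lemma eqmodX_prod1 M T (I : Type) (r : seq I) (P : pred I) (F : I -> {poly int}) :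
  (forall i, P i -> F i = 1 %[mod M, 'X^T]) ->
  \prod_(i <- r | P i) F i = 1 %[mod M, 'X^T].
Proof.
move=> hF; rewrite -[X in eqmodX _ _ _ X](@big1_eq _ 1 *%R _ r P).
exact: eqmodX_prod.
Qed.

Lemma eqmodX_fun_eq_uniq M T p (c f g : {poly int}) : (1 < p)%N -> c`_0 = 1 ->
  f * c = f \Po 'X^p %[mod M, 'X^T] -> g * c = g \Po 'X^p %[mod M, 'X^T] ->
  (M %| f`_0 - g`_0)%Z -> f = g %[mod M, 'X^T].
Proof.
move=> p1 c0 hf hg h0; set h := f - g.
have hh : h * c = h \Po 'X^p %[mod M, 'X^T].
  by rewrite mulrBl linearB /=; apply: eqmodXB.
move=> n; rewrite -coefB -/h; elim/ltn_ind: n => n IH hn.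
case: (posnP n) => [-> | n0]; first by rewrite coefB.
have := hh n hn; rewrite coefM big_ord_recr /= subnn c0 mulr1.
rewrite coef_comp_poly_Xn ?(ltnW p1) //.
set S := \sum_(i < n) _; set C := if _ then _ else _ => hn'.
have hS : (M %| S)%Z.
  by rewrite rpred_sum // => i _; rewrite dvdz_mulr // IH // (ltn_trans _ hn).
have hC : (M %| C)%Z.
  rewrite /C; case: ifP => _; last exact: dvdz0.
  by rewrite IH ?ltn_Pdiv // (leq_ltn_trans (leq_div n p)).
have -> : h`_n = (S + h`_n - C) - S + C by ring.
by rewrite rpredD // rpredB.
Qed.

Lemma dvdz_coef_sub1_of_mul_1subX M T f : f * (1 - 'X) = 1 %[mod M, 'X^T] ->
  forall i, (i < T)%N -> (M %| f`_i - 1)%Z.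
Proof.
move=> hf; elim=> [|i IH] hi; have := hf _ hi.
  by rewrite mulrBr mulr1 coefB coefMX coef1 /= subr0.
rewrite mulrBr mulr1 coefB coefMX coef1 /= subr0 => h.
by rewrite -(subrK f`_i f`_i.+1) -addrA rpredD // IH // ltnW.
Qed.

Lemma comp_Xn_eqmodX q (g : {poly int}) : (0 < q)%N ->
  g \Po 'X^q = (g`_0)%:P %[mod 0, 'X^q].
Proof.
move=> q0 i hi; rewrite coef_comp_poly_Xn // coefC.
case: i hi => [|i] hi; first by rewrite dvdn0 div0n subrr dvdz0.
by rewrite gtnNdvd // subrr dvdz0.
Qed.

Lemma dvdz_coef_mul_root1 M n (D P : {poly int}) :
  (size D <= n.+1)%N -> D.[1] = 0 -> D = 0 %[mod M, 'X^n.+1] ->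
  (forall j, (j <= n)%N -> (M %| P`_j - 1)%Z) -> (M * M %| (D * P)`_n)%Z.
Proof.
move=> hsD D1 hD hP.
have -> : (D * P)`_n = D.[1] + \sum_(j < n.+1) D`_j * (P`_(n - j) - 1).
  rewrite coefM (horner_coef_wide _ hsD) -big_split /=.
  by apply: eq_bigr => j _; rewrite expr1n; ring.
rewrite D1 add0r rpred_sum // => j _; apply: dvdz_mul.
  by have := hD j (ltn_ord j); rewrite coef0 subr0.
by apply: hP; rewrite leq_subr.
Qed.

Lemma coef_mul_comp_Xn q c (f g : {poly int}) : (0 < q)%N -> (size f <= q)%N ->
  (f * (g \Po 'X^q))`_(c * q) = f`_0 * g`_c.
Proof.
move=> q0 hf; rewrite coefM big_ord_recl subn0 coef_comp_poly_Xn // dvdn_mull //.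
rewrite mulnK // big1 ?addr0 // => j _; rewrite lift0.
have [qj | jq] := leqP q j.+1; first by rewrite nth_default ?mul0r // (leq_trans hf).
rewrite coef_comp_poly_Xn // dvdn_subr ?dvdn_mull //.
by rewrite gtnNdvd ?mulr0.
Qed.

(** * Powers of 1 - x *)

Lemma coef_1subX n i : ((1 - 'X) ^+ n : {poly int})`_i = (-1) ^+ i * 'C(n, i)%:R.
Proof.
elim: n i => [|n IH] [|i]; rewrite ?expr0 ?coef1 ?bin0 ?mulr1 //.
- by rewrite bin0n mulr0.
- by rewrite exprS mulrBl mul1r coefB coefXM IH subr0 bin0 mulr1.
- rewrite exprS mulrBl mul1r coefB coefXM /= !IH binS natrD exprS; ring.
Qed.

Lemma coef0_1subX n : ((1 - 'X) ^+ n : {poly int})`_0 = 1.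
Proof. by rewrite coef_1subX mul1r bin0. Qed.

Lemma size_1subX n : (size ((1 - 'X) ^+ n : {poly int}) <= n.+1)%N.
Proof. by apply/leq_sizeP => j hj; rewrite coef_1subX bin_small ?mulr0. Qed.

Lemma comp_1subX (q : {poly int}) : (1 - 'X) \Po q = 1 - q.
Proof. by rewrite rmorphB /= comp_polyX rmorph1. Qed.

Lemma size_1subX_comp n q :
  (size ((1 - 'X) ^+ n \Po 'X^q : {poly int}) <= (n * q).+1)%N.
Proof.
apply: leq_trans (size_comp_poly_leq _ _) _; rewrite size_polyXn ltnS leq_mul2r /=.
by apply/orP; right; rewrite -subn1 leq_subLR add1n size_1subX.
Qed.

Lemma horner1_1subX_comp n q : (0 < n)%N ->
  ((1 - 'X) ^+ n \Po 'X^q : {poly int}).[1] = 0.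
Proof.
move=> n0; rewrite horner_comp hornerXn expr1n horner_exp !hornerE subrr.
by rewrite expr0n gtn_eqF.
Qed.

Lemma frobenius_1subX p T : prime p -> (1 - 'X) ^+ p = 1 - 'X^p %[mod p%:Z, 'X^T].
Proof.
move=> pp i _; rewrite coef_1subX coefB coef1 coefXn.
have p0 := prime_gt0 pp.
case: (ltngtP i p) => [ltip | ltpi | ->].
- case: i ltip => [|i] ltip; first by rewrite bin0 mulr1 subrr dvdz0.
  by rewrite /= !subr0 dvdz_mull // natz; apply: prime_dvd_bin; rewrite ?ltip.
- by rewrite bin_small // (gtn_eqF (ltn_trans p0 ltpi)) mulr0 subrr dvdz0.
- rewrite binn mulr1 (gtn_eqF p0) /= sub0r opprK.
  by case: (even_prime pp) => [-> // | op]; rewrite -signr_odd op addNr dvdz0.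
Qed.

Lemma frobenius_sq_1subX p m T : prime p -> (p %| m)%N ->
  (1 - 'X) ^+ (p * m) = (1 - 'X^p) ^+ m %[mod p%:Z * p%:Z, 'X^T].
Proof.
move=> pp /dvdnP[v ->]; rewrite [(v * p)%N]mulnC mulnA !exprM; apply: eqmodXX.
by apply: eqmodX_expM; [rewrite dvdzz | apply: frobenius_1subX].
Qed.

Lemma frobenius_sq_iter_1subX p m t T : prime p -> (p %| m)%N ->
  (1 - 'X) ^+ (p ^ t * m) = (1 - 'X) ^+ m \Po 'X^(p ^ t) %[mod p%:Z * p%:Z, 'X^T].
Proof.
move=> pp pm; elim: t => [|t IH].
  by rewrite mul1n comp_polyXr; apply: eqmodX_refl.
rewrite expnS -mulnA; apply: (@eqmodX_trans _ _ ((1 - 'X^p) ^+ (p ^ t * m))).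
  by apply: frobenius_sq_1subX; rewrite ?dvdn_mull.
have -> : (1 - 'X^p) ^+ (p ^ t * m) = (1 - 'X) ^+ (p ^ t * m) \Po 'X^p :> {poly int}.
  by rewrite rmorphXn /= comp_1subX.
apply: eqmodX_trans (eqmodX_comp (prime_gt0 pp) IH) _.
by rewrite -comp_polyA comp_Xn_poly -exprM; apply: eqmodX_refl.
Qed.

(** * The generating function of A *)

Lemma geom_trunc_widen p i n T : (0 < p)%N -> (n <= T)%N ->
  geom_trunc p i T = geom_trunc p i n %[mod 0, 'X^n.+1].
Proof.
move=> p0 nT; rewrite /geom_trunc -!(big_mkord xpredT (fun j => 'X^(j * p ^ i))).
rewrite (@big_cat_nat _ _ _ n.+1) //= -[X in eqmodX _ _ _ X]addr0.
apply: eqmodXD; first exact: eqmodX_refl.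
rewrite big_nat; apply: eqmodX_sum0 => j /andP[hj _]; apply: eqmodX_Xn0.
by rewrite (leq_trans hj) // leq_pmulr // expn_gt0 p0.
Qed.

Lemma geom_trunc_tail M p i n T : (T <= p ^ i)%N ->
  geom_trunc p i n = 1 %[mod M, 'X^T].
Proof.
move=> hT; rewrite /geom_trunc big_ord_recl mul0n expr0 -[X in eqmodX _ _ _ X]addr0.
apply: eqmodXD; first exact: eqmodX_refl.
apply: eqmodX_sum0 => j _; apply: eqmodX_Xn0.
by rewrite (leq_trans hT) // leq_pmull.
Qed.

Lemma geom_trunc_comp p i n : geom_trunc p i n \Po 'X^p = geom_trunc p i.+1 n.
Proof.
rewrite /geom_trunc rmorph_sum /=; apply: eq_bigr => j _.
by rewrite comp_Xn_poly -exprM expnS mulnCA.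
Qed.

Lemma geom_trunc0_mul_1subX p n : geom_trunc p 0 n * (1 - 'X) = 1 - 'X^(n.+1).
Proof.
rewrite /geom_trunc (eq_bigr (fun j : 'I_n.+1 => 'X^j)) => [|j _]; last first.
  by rewrite expn0 muln1.
by rewrite mulrC -opprB mulNr -subrX1 opprB.
Qed.

Definition Apoly (p k T : nat) : {poly int} := \prod_(i < T) geom_trunc p i T ^+ k.

Lemma coef_Apoly p k n T : (1 < p)%N -> (n < T)%N -> (Apoly p k T)`_n = A p k n.
Proof.
move=> p1 hT; apply: (eqmodX_coef _ (ltnSn n)).
rewrite /Apoly -!(big_mkord xpredT (fun i => geom_trunc p i _ ^+ k)).
rewrite (@big_cat_nat _ _ _ n.+1) //= -[X in eqmodX _ _ _ X]mulr1.
apply: eqmodXM.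
  apply: eqmodX_prod => i _; apply: eqmodXX.
  exact: geom_trunc_widen (ltnW p1) (ltnW hT).
rewrite big_nat; apply: eqmodX_prod1 => i /andP[hi _].
have := eqmodXX k (@geom_trunc_tail 0 p i T n.+1 _); rewrite expr1n; apply.
exact: leq_trans hi (ltnW (ltn_expl i p1)).
Qed.

Lemma A0 p k : A p k 0 = 1.
Proof. by rewrite /A big_ord1 /geom_trunc big_ord1 mul0n expr0 expr1n coef1. Qed.

Lemma Apoly_fun_eq p k T : (1 < p)%N ->
  Apoly p k T * (1 - 'X) ^+ k = Apoly p k T \Po 'X^p %[mod 0, 'X^T].
Proof.
move=> p1; case: T => [|T]; first by move=> i.
rewrite /Apoly rmorph_prod /= big_ord_recl (big_ord_recr T) /=.
rewrite mulrAC -exprMn [X in eqmodX _ _ X _]mulrC; apply: eqmodXM.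
  apply: eqmodX_prod => i _; rewrite rmorphXn /= geom_trunc_comp.
  exact: eqmodX_refl.
rewrite rmorphXn /= geom_trunc_comp geom_trunc0_mul_1subX.
apply: (@eqmodX_trans _ _ 1).
  by have := eqmodXX k (@eqmodX_1subXn 0 T.+1 T.+2 (leqnSn _)); rewrite expr1n.
have := eqmodXX k (@geom_trunc_tail 0 p T.+1 T.+1 T.+1 (ltnW (ltn_expl _ p1))).
by rewrite expr1n; apply: eqmodX_sym.
Qed.

Lemma A_expansion p k n : (1 < p)%N ->
  A p k n = \sum_(j < (p * n).+1) A p k j * ((1 - 'X) ^+ k)`_(p * n - j).
Proof.
move=> p1; have hn : (n < (p * n).+1)%N by rewrite ltnS leq_pmull // ltnW.
have := eqmodX_coef (@Apoly_fun_eq p k (p * n).+1 p1) (ltnSn (p * n)).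
rewrite coefM coef_comp_poly_Xn ?(ltnW p1) // dvdn_mulr // mulKn ?(ltnW p1) //.
rewrite (coef_Apoly k p1 hn) => <-; apply: eq_bigr => j _.
by rewrite coef_Apoly.
Qed.

Lemma A_eqmod M p k T (f : {poly int}) : (1 < p)%N -> f`_0 = 1 ->
  f * (1 - 'X) ^+ k = f \Po 'X^p %[mod M, 'X^T] ->
  forall n, (n < T)%N -> (M %| A p k n - f`_n)%Z.
Proof.
move=> p1 f0 hf n hn; rewrite -(coef_Apoly k p1 hn).
apply: (eqmodX_fun_eq_uniq (T := T) p1 (coef0_1subX k) _ hf _ hn).
  exact: eqmodX_dvd (dvdz0 M) (@Apoly_fun_eq p k T p1).
by rewrite (coef_Apoly k p1 (leq_ltn_trans (leq0n n) hn)) A0 f0 subrr dvdz0.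
Qed.

Lemma A_dvdp p d n : prime p -> (d < n)%N -> (p %| A p ((p - 1) * d) n)%Z.
Proof.
move=> pp dn; have p1 := prime_gt1 pp.
have hf : (1 - 'X) ^+ d * (1 - 'X) ^+ ((p - 1) * d) = (1 - 'X) ^+ d \Po 'X^p
             %[mod p%:Z, 'X^n.+1].
  rewrite -exprD rmorphXn /= comp_1subX.
  have -> : (d + (p - 1) * d = p * d)%N by rewrite -mulSn subn1 prednK // ltnW.
  by rewrite exprM; apply: eqmodXX; apply: frobenius_1subX.
have := A_eqmod p1 (coef0_1subX d) hf (ltnSn n).
by rewrite coef_1subX bin_small // mulr0 subr0.
Qed.

(** * A solution of the functional equation modulo p^2 *)

Definition pprod (p L : nat) : {poly int} := \prod_(i < L) (1 - 'X^(p ^ i)) ^+ (p - 1).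

Lemma pprodS p L : pprod p L.+1 = (1 - 'X) ^+ (p - 1) * (pprod p L \Po 'X^p).
Proof.
rewrite /pprod big_ord_recl expn0 expr1 rmorph_prod /=; congr (_ * _).
apply: eq_bigr => i _; rewrite rmorphXn rmorphB /= rmorph1 comp_Xn_poly.
by rewrite -exprM -expnS.
Qed.

Lemma pprodSr p L : pprod p L.+1 = pprod p L * (1 - 'X^(p ^ L)) ^+ (p - 1).
Proof. by rewrite /pprod big_ord_recr. Qed.

Lemma coef0_pprod p L : (0 < p)%N -> (pprod p L)`_0 = 1.
Proof.
move=> p0; rewrite -horner_coef0 horner_prod big1 // => i _.
by rewrite horner_exp !hornerE expr0n expn_eq0 (negbTE (lt0n_neq0 p0)) subr0 expr1n.
Qed.

Lemma pprod_mul_1subX p L T : prime p ->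
  pprod p L * (1 - 'X) = 1 - 'X^(p ^ L) %[mod p%:Z, 'X^T].
Proof.
move=> pp; have p0 := prime_gt0 pp; elim: L => [|L IH].
  by rewrite /pprod big_ord0 mul1r expr1; apply: eqmodX_refl.
rewrite pprodSr mulrAC.
apply: (@eqmodX_trans _ _ ((1 - 'X^(p ^ L)) ^+ p)).
  have -> : (1 - 'X^(p ^ L)) ^+ p = (1 - 'X^(p ^ L)) * (1 - 'X^(p ^ L)) ^+ (p - 1)
              :> {poly int} by rewrite -exprS subn1 prednK.
  by apply: eqmodXM IH _; apply: eqmodX_refl.
have -> : (1 - 'X^(p ^ L)) ^+ p = (1 - 'X) ^+ p \Po 'X^(p ^ L) :> {poly int}.
  by rewrite rmorphXn /= comp_1subX.
have -> : 1 - 'X^(p ^ L.+1) = (1 - 'X^p) \Po 'X^(p ^ L) :> {poly int}.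
  by rewrite rmorphB /= rmorph1 comp_Xn_poly -exprM -expnSr.
by apply: eqmodX_comp; [rewrite expn_gt0 p0 | apply: frobenius_1subX].
Qed.

Lemma coef_pprod_modp p L j : prime p -> (j < p ^ L)%N ->
  (p%:Z %| (pprod p L)`_j - 1)%Z.
Proof.
move=> pp hj; apply: (dvdz_coef_sub1_of_mul_1subX _ hj).
apply: eqmodX_trans; first exact: pprod_mul_1subX.
exact: eqmodX_1subXn.
Qed.

Lemma coef_comp_pprod p t L c (h : {poly int}) : (0 < p)%N ->
  ((h \Po 'X^(p ^ t)) * pprod p (L + t))`_(c * p ^ t) = (h * pprod p L)`_c.
Proof.
move=> p0; elim: t c => [|t IH] c; first by rewrite expn0 comp_polyXr addn0 muln1.
rewrite addnS pprodS expnSr mulnA -IH.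
have -> : 'X^(p ^ t * p) = 'X^(p ^ t) \Po 'X^p :> {poly int}.
  by rewrite comp_Xn_poly -exprM mulnC.
rewrite comp_polyA mulrCA -rmorphM /= coef_mul_comp_Xn // ?coef0_1subX ?mul1r //.
by rewrite -[X in (_ <= X)%N](subnK p0) addn1 size_1subX.
Qed.

Lemma coef_1subX_pprod p u L : (0 < p)%N -> (u < p)%N ->
  ((1 - 'X) ^+ u * pprod p L.+1)`_u = (-1) ^+ u * 'C(u + (p - 1), u)%:R.
Proof.
move=> p0 up; rewrite pprodS mulrA -exprD -coef_1subX.
apply: (@eqmodX_coef u.+1) => //; rewrite -[X in eqmodX _ _ _ X]mulr1.
apply: eqmodXM; first exact: eqmodX_refl.
have := comp_Xn_eqmodX (pprod p L) p0; rewrite coef0_pprod //.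
exact: eqmodX_leq.
Qed.

Lemma coef_1subX_pprod_modp2 p u s : prime p -> (0 < u < p)%N -> (0 < s)%N ->
  (p%:Z * p%:Z %| ((1 - 'X) ^+ (u * p ^ s) * pprod p s.+1)`_(u * p ^ s)
                   - (-1) ^+ u * 'C(u + (p - 1), u)%:R)%Z.
Proof.
move=> pp /andP[u0 up]; have p0 := prime_gt0 pp.
case: s => // s _; set w := (u * p ^ s.+1)%N; set q := (p ^ s)%N.
have q0 : (0 < q)%N by rewrite expn_gt0 p0.
have hw : w = (q * (p * u))%N by rewrite /w /q expnS; ring.
(* Modulo p^2, (1 - x)^w = (1 - x^(p^(s+1)))^u + D, where D vanishes modulo p
   and at x = 1; as pprod is 1 / (1 - x) modulo p, D * pprod contributes
   nothing modulo p^2. *)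
set D : {poly int} :=
  ((1 - 'X) ^+ (p * u) \Po 'X^q) - ((1 - 'X) ^+ u \Po 'X^(p ^ s.+1)).
have hfrob : (1 - 'X) ^+ w * pprod p s.+2
    = (((1 - 'X) ^+ u \Po 'X^(p ^ s.+1)) + D) * pprod p s.+2
    %[mod p%:Z * p%:Z, 'X^w.+1].
  rewrite /D addrCA subrr addr0; apply: eqmodXM; last exact: eqmodX_refl.
  by rewrite hw; apply: frobenius_sq_iter_1subX; rewrite ?dvdn_mulr.
have hD : D = 0 %[mod p%:Z, 'X^w.+1].
  have -> : D = ((1 - 'X) ^+ (p * u) - ((1 - 'X) ^+ u \Po 'X^p)) \Po 'X^q.
    by rewrite rmorphB /= -comp_polyA comp_Xn_poly -exprM -expnSr.
  rewrite -(comp_poly0 'X^q); apply: eqmodX_comp => //.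
  rewrite -(subrr ((1 - 'X) ^+ u \Po 'X^p)); apply: eqmodXB; last exact: eqmodX_refl.
  by rewrite rmorphXn /= comp_1subX exprM; apply: eqmodXX; apply: frobenius_1subX.
have hsD : (size D <= w.+1)%N.
  rewrite (leq_trans (size_polyD _ _)) // geq_max size_polyN.
  apply/andP; split; apply: leq_trans (size_1subX_comp _ _) _ => //.
  by rewrite hw mulnC.
have hD1 : D.[1] = 0.
  by rewrite hornerD hornerN !horner1_1subX_comp ?subrr ?muln_gt0 ?u0 ?p0.
have hDP : (p%:Z * p%:Z %| (D * pprod p s.+2)`_w)%Z.
  apply: dvdz_coef_mul_root1 hsD hD1 hD _ => j hj.
  apply: coef_pprod_modp pp _; rewrite (leq_ltn_trans hj) //.
  by rewrite /w [in X in (_ < X)%N]expnS ltn_pmul2r ?expn_gt0 ?p0.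
have := hfrob w (ltnSn w); rewrite mulrDl coefD.
rewrite -[s.+2]add1n coef_comp_pprod // add1n (coef_1subX_pprod 0 p0 up) => h.
by have := rpredD h hDP; rewrite opprD addrA subrK.
Qed.

Lemma pprod_fun_eq p w L T :
  prime p -> (p %| w)%N -> (0 < w)%N -> (T <= p ^ L.+1)%N ->
  (1 - 'X) ^+ w * pprod p L.+1 * (1 - 'X) ^+ ((p - 1) * (w - 1))
    = ((1 - 'X) ^+ w * pprod p L.+1) \Po 'X^p %[mod p%:Z * p%:Z, 'X^T].
Proof.
move=> pp pw w0 hT; have p0 := prime_gt0 pp.
have -> : (1 - 'X) ^+ w * pprod p L.+1 * (1 - 'X) ^+ ((p - 1) * (w - 1))
          = (1 - 'X) ^+ (p * w) * (pprod p L \Po 'X^p).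
  have e : (w + (p - 1) + (p - 1) * (w - 1) = p * w)%N by nia.
  by rewrite pprodS -e !exprD; ring.
rewrite rmorphM rmorphXn /= comp_1subX pprodSr rmorphM /=.
apply: eqmodXM; first exact: frobenius_sq_1subX.
rewrite -[X in eqmodX _ _ X _]mulr1; apply: eqmodXM; first exact: eqmodX_refl.
rewrite rmorphXn rmorphB /= rmorph1 comp_Xn_poly -exprM -expnS.
have := eqmodXX (p - 1) (eqmodX_1subXn (p%:Z * p%:Z) hT); rewrite expr1n.
exact: eqmodX_sym.
Qed.

Lemma A_pow_modp2 p u s : prime p -> (0 < u < p)%N -> (0 < s)%N ->
  (p%:Z * p%:Z %| A p ((p - 1) * (u * p ^ s - 1)) (u * p ^ s)
                  - (-1) ^+ u * 'C(u + (p - 1), u)%:R)%Z.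
Proof.
move=> pp hu s0; have p0 := prime_gt0 pp; have /andP[u0 up] := hu.
set w := (u * p ^ s)%N.
have hw : (w.+1 <= p ^ s.+1)%N by rewrite /w expnS ltn_pmul2r ?expn_gt0 ?p0.
have w0 : (0 < w)%N by rewrite muln_gt0 u0 expn_gt0 p0.
have pw : (p %| w)%N by rewrite dvdn_mull // dvdn_exp.
have hG0 : ((1 - 'X) ^+ w * pprod p s.+1)`_0 = 1.
  by rewrite coef0M coef0_1subX coef0_pprod // mul1r.
have := A_eqmod (prime_gt1 pp) hG0 (pprod_fun_eq pp pw w0 hw) (ltnSn w).
by move=> /rpredD/(_ (coef_1subX_pprod_modp2 pp hu s0)); rewrite addrA subrK.
Qed.

(** * Valuations *)

Lemma nu_eq1 p a : prime p ->
  (nu p a == 1%N) = (p%:Z %| a)%Z && ~~ (p%:Z * p%:Z %| a)%Z.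
Proof.
move=> pp; rewrite /nu; have [-> | a0] := eqVneq a 0.
  by rewrite !dvdz0 /= logn0.
have a0' : (0 < `|a|)%N by rewrite absz_gt0.
rewrite !dvdzE abszM /= mulnn -[X in (X %| _)%N && _]expn1 !pfactor_dvdn //.
by case: logn => [|[|]].
Qed.

Lemma nu_eq1_eqmod p a b : prime p -> (p%:Z * p%:Z %| a - b)%Z ->
  nu p b = 1%N -> nu p a = 1%N.
Proof.
move=> pp hab /eqP; rewrite nu_eq1 // => hb; apply/eqP; rewrite nu_eq1 //.
have hpab : (p%:Z %| a - b)%Z := dvdz_trans (dvdz_mulr _ (dvdzz _)) hab.
by rewrite -(subrK b a) (rpredDl b hpab) (rpredDl b hab).
Qed.

Lemma logn_fact_lt_sq p n : prime p -> (n < p * p)%N -> logn p n`! = (n %/ p)%N.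
Proof.
move=> pp hn; rewrite logn_fact //.
case: n hn => [|n] hn; first by rewrite big_geq // div0n.
rewrite big_ltn // expn1 big_nat big1 ?addn0 // => k /andP[hk _].
by rewrite divn_small // (leq_trans hn) // mulnn leq_pexp2l // prime_gt0.
Qed.

Lemma logn_bin_add_pred p u : prime p -> (0 < u < p)%N ->
  logn p 'C(u + (p - 1), u) = 1%N.
Proof.
move=> pp /andP[u0 up]; have p1 := prime_gt1 pp.
have hp2 : (p + p <= p * p)%N by nia.
have := congr1 (logn p) (bin_fact (leq_addr (p - 1) u)).
rewrite addKn !lognM ?muln_gt0 ?fact_gt0 ?bin_gt0 ?leq_addr //.
have hdiv : ((u + (p - 1)) %/ p = 1)%N.
  have -> : (u + (p - 1) = 1 * p + (u - 1))%N by lia.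
  by rewrite divnMDl ?divn_small; lia.
by rewrite !logn_fact_lt_sq ?hdiv ?(divn_small up) ?(@divn_small (p - 1)); lia.
Qed.

Lemma nu_A_pow p u s : prime p -> (0 < u < p)%N -> (0 < s)%N ->
  nu p (A p ((p - 1) * (u * p ^ s - 1)) (u * p ^ s)) = 1%N.
Proof.
move=> pp hu s0; apply: (nu_eq1_eqmod pp (A_pow_modp2 pp hu s0)).
by rewrite /nu abszMsign natz absz_nat logn_bin_add_pred.
Qed.

Lemma nu_A_step p d n : prime p -> (d < n)%N ->
  nu p (A p ((p - 1) * d) n) = 1%N ->
  exists2 m, (n < m)%N & nu p (A p ((p - 1) * d) m) = 1%N.
Proof.
move=> pp dn hn; have p1 := prime_gt1 pp; set k := ((p - 1) * d)%N.
have [/exists_inP[j nj /eqP hj] | no_j] :=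
  boolP [exists (j : 'I_(p * n).+1 | (n < j)%N), nu p (A p k j) == 1%N].
  by exists j.
move/eqP: hn; rewrite nu_eq1 // => /andP[_ /negP]; case.
rewrite (A_expansion k n p1) rpred_sum // => j _.
have [nj | jn] := ltnP n j; last first.
  (* p n - j >= (p - 1) n > k, so the binomial coefficient vanishes. *)
  rewrite coef_1subX bin_small ?mulr0 ?dvdz0 //.
  have : (k < (p - 1) * n)%N by rewrite ltn_pmul2l // subn_gt0.
  by rewrite mulnBl mul1n => /leq_trans; apply; apply: leq_sub2l.
apply: dvdz_mulr; move/exists_inPn: no_j => /(_ j nj).
by rewrite nu_eq1 // A_dvdp // ?negbK // (ltn_trans dn nj).
Qed.

Lemma unbounded_of_step (P : nat -> Prop) n0 :
  P n0 -> (forall n, P n -> exists2 m, (n < m)%N & P m) ->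
  forall N, exists2 n, (N <= n)%N & P n.
Proof.
move=> h0 hstep; elim=> [|N [n Nn /hstep [m nm hm]]]; first by exists n0.
by exists m => //; apply: leq_ltn_trans Nn nm.
Qed.

Theorem theorem3p1 (p u s : nat) :
  prime p -> (3 <= p)%N -> (2 <= u <= p - 1)%N -> (0 < s)%N ->
  forall N : nat, exists n : nat,
    (N <= n)%N /\ nu p (A p ((p - 1) * (u * p ^ s - 1)) n) = 1%N.
Proof.
(* The argument works for every prime p and 0 < u < p. *)
move=> pp _ /andP[u2 up1] s0 N.
have hu : (0 < u < p)%N by have := prime_gt0 pp; lia.
set d := (u * p ^ s - 1)%N.
have w0 : (0 < u * p ^ s)%N.
  by case/andP: hu => u0 _; rewrite muln_gt0 u0 expn_gt0 (prime_gt0 pp).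
have base : (d < u * p ^ s)%N /\ nu p (A p ((p - 1) * d) (u * p ^ s)) = 1%N.
  by split; [rewrite /d subn1 ltn_predL | exact: nu_A_pow].
have step n : (d < n)%N /\ nu p (A p ((p - 1) * d) n) = 1%N ->
    exists2 m, (n < m)%N & (d < m)%N /\ nu p (A p ((p - 1) * d) m) = 1%N.
  case=> dn /(nu_A_step pp dn) [m nm hm]; exists m => //.
  by split=> //; apply: ltn_trans dn nm.
have [n Nn [_ hn]] := unbounded_of_step base step N.
by exists n.
Qed.
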